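(* Consider the input-output system $\dot{\mathbf x}=\mathbf f(\mathbf x)+\hat{\mathbf e}_1 g(u,x_1)$, $u\in J$, with output $x_j$ for some fixed $j$, satisfying assumption (A0). Let $\mathcal J$ be the signed symbolic matrix consistent with $\frac{\partial\mathbf f}{\partial\mathbf x}$. If the polynomial $\mathcal J[\hat 1,\hat j]$ is not identically zero and does not have mixed signs, then the system is not quasi-adaptive and does not exhibit biphasic response.
   Context: $\mathcal X\subset\mathbb R^n$, $J\subset\mathbb R$ an interval, $\mathbf f:\mathcal X\to\mathbb R^n$ is $C^1$, every entry $\partial f_i/\partial x_k$ has constant sign (positive, negative, or identically zero) on $\mathcal X$, and $\partial f_i/\partial x_i<0$. $\hat{\mathbf e}_1$ is the first standard basis vector. The control term $g$ is one of: flow, $g(u,x_1)=u$; activation, $g(u,x_1)=(u+k_{\mathrm{on}})(x_T-x_1)-k_{\mathrm{off}}x_1$; inhibition, $g(u,x_1)=k_{\mathrm{on}}(x_T-x_1)-(u+k_{\mathrm{off}})x_1$, with constants $x_T,k_{\mathrm{on}},k_{\mathrm{off}}>0$; in the activation and inhibition cases the state space satisfies $0\le x_1\le x_T$ and every steady state has $0<x_1<x_T$. Write $\mathbf F(\mathbf x,u)=\mathbf f(\mathbf x)+\hat{\mathbf e}_1g(u,x_1)$. Assumption (A0): for every $u_0\in J$ there is $\mathbf x_0\in\mathcal X$ with $\mathbf F(\mathbf x_0,u_0)=\mathbf 0$ and $\frac{\partial\mathbf F}{\partial\mathbf x}(\mathbf x_0,u_0)$ of full rank; by the implicit function theorem this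 gives continuously differentiable steady-state curves $\mathbf x^*(u)$. The system is quasi-adaptive if, along such a steady-state curve, $\partial_u x_j^*(u_0)=0$ for some $u_0\in J$; it exhibits biphasic response if $\partial_u x_j^*(u_1)\,\partial_u x_j^*(u_2)<0$ for some $u_1,u_2\in J$. The signed symbolic matrix consistent with $\frac{\partial\mathbf f}{\partial\mathbf x}$ is the matrix $\mathcal J$ whose $(i,k)$ entry is $a_{ik}$, $-a_{ik}$ or $0$ (with $a_{ik}$ distinct variables) according as $\partial f_i/\partial x_k$ is positive, negative, or zero. $\mathcal J[\hat 1,\hat j]$ is the minor with row $1$ and column $j$ deleted. A polynomial has mixed signs if, after cancellations, it has monomials with both positive and negative coefficients. *)

From HB Require Import structures.
From mathcomp Require Import all_boot all_order all_algebra.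
From mathcomp Require Import mpoly.
From mathcomp Require Import all_classical all_reals all_analysis.
Set Implicit Arguments. Unset Strict Implicit. Unset Printing Implicit Defensive.
Import Order.TTheory GRing.Theory Num.Theory.
Import numFieldNormedType.Exports.
Local Open Scope classical_set_scope.
Local Open Scope ring_scope.

Inductive sgn := SPos | SNeg | SZero.

Definition has_sgn {R : realDomainType} (s : sgn) (r : R) : Prop :=
  match s with SPos => 0 < r | SNeg => r < 0 | SZero => r = 0 end.

(** Jacobian matrix of h at x : (i,k) entry = partial derivative of h_i
    with respect to x_k.  Vectors of R^m are row vectors 'rV[R]_m. *)
Definition jac {R : realType} {m : nat} (h : 'rV[R]_m -> 'rV[R]_m)
  (x : 'rV[R]_m) : 'M[R]_m :=
  \matrix_(i < m, k < m) ('D_(delta_mx 0 k) h x) 0 i.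

Inductive ctrl (R : realType) :=
  | Flow
  | Activation (xT kon koff : R)
  | Inhibition (xT kon koff : R).

Definition gctrl {R : realType} (c : ctrl R) (u x1 : R) : R :=
  match c with
  | Flow => u
  | Activation xT kon koff => (u + kon) * (xT - x1) - koff * x1
  | Inhibition xT kon koff => kon * (xT - x1) - (u + koff) * x1
  end.

(** F(x,u) = f(x) + e_1 g(u, x_1)   (index 0 is the first coordinate). *)
Definition Fsys {R : realType} {n : nat} (f : 'rV[R]_n.+1 -> 'rV[R]_n.+1)
  (c : ctrl R) (x : 'rV[R]_n.+1) (u : R) : 'rV[R]_n.+1 :=
  f x + gctrl c u (x 0 0) *: delta_mx 0 0.

Definition ctrl_ok {R : realType} {n : nat} (f : 'rV[R]_n.+1 -> 'rV[R]_n.+1)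
  (c : ctrl R) (X : set 'rV[R]_n.+1) (J : interval R) : Prop :=
  match c with
  | Flow => True
  | Activation xT kon koff | Inhibition xT kon koff =>
      [/\ 0 < xT, 0 < kon, 0 < koff,
          (forall x, X x -> 0 <= x 0 0 <= xT) &
          (forall x u, X x -> u \in J -> Fsys f c x u = 0 -> 0 < x 0 0 < xT)]
  end.

Definition A0 {R : realType} {n : nat} (f : 'rV[R]_n.+1 -> 'rV[R]_n.+1)
  (c : ctrl R) (X : set 'rV[R]_n.+1) (J : interval R) : Prop :=
  forall u0, u0 \in J -> exists x0, [/\ X x0, Fsys f c x0 u0 = 0 &
    \rank (jac (fun x => Fsys f c x u0) x0) = n.+1].

Definition steady_curve {R : realType} {n : nat} (f : 'rV[R]_n.+1 -> 'rV[R]_n.+1)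
  (c : ctrl R) (X : set 'rV[R]_n.+1) (J : interval R) (xs : R -> 'rV[R]_n.+1)
  : Prop :=
  [/\ forall u, u \in J -> X (xs u),
      forall u, u \in J -> Fsys f c (xs u) u = 0,
      forall u, u \in J -> derivable xs u 1 &
      {in J, forall u, {for u, continuous (fun v => 'D_1 xs v)}}].

Definition quasi_adaptive {R : realType} {n : nat} (J : interval R)
  (xs : R -> 'rV[R]_n.+1) (j : 'I_n.+1) : Prop :=
  exists2 u0, u0 \in J & ('D_1 xs u0) 0 j = 0.

Definition biphasic {R : realType} {n : nat} (J : interval R)
  (xs : R -> 'rV[R]_n.+1) (j : 'I_n.+1) : Prop :=
  exists u1 u2, [/\ u1 \in J, u2 \in J & ('D_1 xs u1) 0 j * ('D_1 xs u2) 0 j < 0].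

(** Signed symbolic matrix: entry (i,k) is a_{ik}, -a_{ik} or 0, where the
    a_{ik} are distinct variables of the polynomial ring Z[a_{ik}],
    a_{ik} being variable number mxvec_index i k. *)
Definition symJ (m : nat) (s : 'I_m -> 'I_m -> sgn)
  : 'M[mpoly.mpoly (m * m) int]_m :=
  \matrix_(i < m, k < m)
    match s i k with
    | SPos => mpoly.mpolyX int (mpoly.mnm1 (mxvec_index i k))
    | SNeg => - mpoly.mpolyX int (mpoly.mnm1 (mxvec_index i k))
    | SZero => 0
    end.

Definition minor1j (n : nat) (s : 'I_n.+1 -> 'I_n.+1 -> sgn) (j : 'I_n.+1)
  : mpoly.mpoly (n.+1 * n.+1) int :=
  \det (row' 0 (col' j (symJ s))).

(** Mixed signs: after cancellation (i.e. in the normal form of the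
    polynomial) there are monomials with positive and negative coefficients. *)
Definition mixed_signs (N : nat) (p : mpoly.mpoly N int) : Prop :=
  exists m1 m2, [/\ m1 \in mpoly.msupp p, m2 \in mpoly.msupp p,
     0 < mpoly.mcoeff m1 p & mpoly.mcoeff m2 p < 0].

From HB Require Import structures.
From mathcomp Require Import all_boot all_order all_algebra.
From mathcomp Require Import mpoly.
From mathcomp Require Import all_classical all_reals all_analysis.
From mathcomp Require Import ring.
Import Order.TTheory GRing.Theory Num.Theory.
Import numFieldNormedType.Exports.
Local Open Scope classical_set_scope.
Local Open Scope ring_scope.

(* Differentiating the steady-state identity f(xs(u)) + e_1 g(u, xs_1(u)) = 0
   along the curve gives the linear system
     xs'(u) (Jf^T + a e_1 e_1^T) = -(dg/du) e_1,    dg/du = 1, x_T - x_1 or -x_1,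
   and dg/du never vanishes at a steady state.  By Cramer's rule xs_j'(u) times
   the determinant of the system is dg/du times, up to sign, the minor obtained by
   deleting row 1 and column j of the Jacobian; the rank-one correction lies in
   the deleted row.  That minor is the polynomial J[1^, j^] evaluated at the
   positive numbers |df_i/dx_k|, and a nonzero polynomial whose coefficients all
   have one sign does not vanish at positive points.  So xs_j' has no zero on J
   (no quasi-adaptation) and, being continuous, keeps one sign on the interval J
   (no biphasic response). *)

Section SignDefinitePolynomial.
Variables (R : realDomainType) (N : nat).
Implicit Types (p : {mpoly int[N]}) (h : 'I_N -> R).

Lemma msupp_nonempty p : p != 0 -> exists m, m \in msupp p.
Proof.
by rewrite -msupp_eq0; case: (msupp p) => // m r _; exists m; rewrite mem_head.
Qed.

Lemma mmap_gt0 p h : p != 0 -> (forall m, m \in msupp p -> 0 < p@_m) ->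
  (forall i, 0 < h i) -> 0 < mmap intr h p.
Proof.
move=> p_neq0 coef_gt0 h_gt0.
have term_gt0 m : m \in msupp p -> 0 < (p@_m)%:~R * mmap1 h m.
  move=> m_supp; rewrite mulr_gt0 ?ltr0z ?coef_gt0 //.
  by rewrite prodr_gt0 // => i _; rewrite exprn_gt0.
have [m0 m0_supp] := msupp_nonempty _ p_neq0.
rewrite /mmap big_seq_cond lt_def psumr_neq0 => [|m /andP[/term_gt0/ltW]//].
rewrite sumr_ge0 ?andbT => [|m /andP[/term_gt0/ltW]//].
by apply/hasP; exists m0; rewrite // m0_supp term_gt0.
Qed.

Lemma mmap_neq0 p h : p != 0 -> ~ mixed_signs p -> (forall i, 0 < h i) ->
  mmap intr h p != 0.
Proof.
move=> p_neq0 not_mixed h_gt0.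
have [m0 m0_supp] := msupp_nonempty _ p_neq0.
have coef_neq0 m : m \in msupp p -> p@_m != 0 by rewrite mcoeff_msupp.
have [m0_gt0|m0_lt0|m0_eq0] := ltrgt0P (p@_m0).
- apply/lt0r_neq0/mmap_gt0 => // m m_supp.
  have [//|m_lt0|m_eq0] := ltrgt0P (p@_m).
    by case: not_mixed; exists m0, m.
  by move: (coef_neq0 _ m_supp); rewrite m_eq0 eqxx.
- rewrite -oppr_eq0 -mmapN; apply/lt0r_neq0/mmap_gt0 => [|m|//].
    by rewrite oppr_eq0.
  rewrite (perm_mem (msuppN p)) mcoeffN oppr_gt0 => m_supp.
  have [m_gt0|//|m_eq0] := ltrgt0P (p@_m).
    by case: not_mixed; exists m, m0.
  by move: (coef_neq0 _ m_supp); rewrite m_eq0 eqxx.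
- by move: (coef_neq0 _ m0_supp); rewrite m0_eq0 eqxx.
Qed.

End SignDefinitePolynomial.

Lemma symJ_realization (R : realDomainType) (m : nat) (s : 'I_m -> 'I_m -> sgn)
    (M : 'M[R]_m) :
  (forall i k, has_sgn (s i k) (M i k)) ->
  exists2 h : 'I_(m * m) -> R, (forall l, 0 < h l) &
    map_mx (mmap intr h) (symJ s) = M.
Proof.
move=> M_sgn.
(* Variables of zero entries do not occur in [symJ s]; any positive value does. *)
pose h l := if mxvec M 0 l == 0 then 1 else `|mxvec M 0 l|.
exists h => [l|].
  by rewrite /h; case: eqP => [_|/eqP]; rewrite ?ltr01 ?normr_gt0.
apply/matrixP => i k; rewrite !mxE /h.
have := M_sgn i k; case: (s i k) => /= Mik.
- by rewrite mmapX mmap1U mxvecE gt_eqF // gtr0_norm.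
- by rewrite mmapN mmapX mmap1U mxvecE lt_eqF // ltr0_norm // opprK.
- by rewrite mmap0 Mik.
Qed.

Lemma minor1j_sign_pattern_neq0 {R : realDomainType} {n : nat}
    {s : 'I_n.+1 -> 'I_n.+1 -> sgn} {j : 'I_n.+1} {M : 'M[R]_n.+1} :
  (forall i k, has_sgn (s i k) (M i k)) ->
  minor1j s j != 0 -> ~ mixed_signs (minor1j s j) ->
  \det (row' 0 (col' j M)) != 0.
Proof.
move=> /symJ_realization[h h_gt0 <-] minor_neq0 not_mixed.
by rewrite -map_col' -map_row' det_map_mx mmap_neq0.
Qed.

Lemma cofactor_addZdelta (R : comNzRingType) (n : nat) (A : 'M[R]_n) a i j k :
  cofactor (A + a *: delta_mx i k) j k = cofactor A j k.
Proof.
rewrite /cofactor; congr (_ * \det _); apply/matrixP => r c; rewrite !mxE.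
by rewrite [lift k c == k]eq_sym (negbTE (neq_lift k c)) andbF mulr0 addr0.
Qed.

Lemma row_solution_coord_neq0 (R : idomainType) (n : nat) (B : 'M[R]_n)
    (d : 'rV[R]_n) (b : R) (i j : 'I_n) :
  d *m B = b *: delta_mx 0 i -> b != 0 -> cofactor B j i != 0 -> d 0 j != 0.
Proof.
move=> dB b_neq0 cof_neq0.
have cramer : d 0 j * \det B = b * cofactor B j i.
  have := congr1 (fun v => (v *m \adj B) 0 j) dB.
  rewrite /= -mulmxA mul_mx_adj mul_mx_scalar -scalemxAl.
  by rewrite -rowE !mxE mulrC.
apply: contra_neq (mulf_neq0 b_neq0 cof_neq0); rewrite -cramer => ->.
by rewrite mul0r.
Qed.

Lemma mul_row_delta (R : pzSemiRingType) (n p : nat) (d : 'rV[R]_n) i (k : 'I_p) :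
  d *m delta_mx i k = d 0 i *: delta_mx 0 k.
Proof.
apply/matrixP => z c; rewrite ord1 !mxE (bigD1 i) //= big1 ?addr0.
  by rewrite !mxE eqxx.
by move=> l /negbTE l_neq_i; rewrite mxE l_neq_i mulr0.
Qed.

Lemma derive1_eq0_on_itv {R : realType} {V : normedModType R} {h : R -> V}
    {J : interval R} {u : R} :
  (exists a b, [/\ a \in J, b \in J & a < b]) -> u \in J ->
  (forall v, v \in J -> h v = 0) -> derivable h u 1 -> 'D_1 h u = 0.
Proof.
move=> [a [b [aJ bJ ab]]] uJ h0 dh.
have J_itv := @interval_is_interval R J.
(* [u] may be an endpoint of [J]: use the one-sided quotient that stays in [J]. *)
rewrite /derive; set q := (fun t : R => _).
have q0 t : u + t \in J -> q t = 0.
  move=> tJ; rewrite /q /= (h0 u uJ) h0 ?subr0 ?scaler0 //.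
  by rewrite /GRing.scale /= mulr1 addrC.
have [ub|bu] := ltP u b.
- rewrite (cvg_at_rightE q) //; apply: cvg_lim => //.
  apply: cvg_near_cst; near=> t; apply: q0; apply: (J_itv u b) => //.
  apply/andP; split; first by rewrite lerDl; near: t; exact: nbhs_right_ge.
  by rewrite -lerBrDl; near: t; apply: nbhs_right_le; rewrite subr_gt0.
- have au : a < u by apply: lt_le_trans bu.
  rewrite (cvg_at_leftE q) //; apply: cvg_lim => //.
  apply: cvg_near_cst; near=> t; apply: q0; apply: (J_itv a u) => //.
  apply/andP; split; last by rewrite gerDl; near: t; exact: nbhs_left_le.
  by rewrite -lerBlDl; near: t; apply: nbhs_left_ge; rewrite subr_lt0.
Unshelve. all: by end_near.
Qed.

Lemma continuous_neq0_on_itv_sign {R : realType} {J : interval R} {g : R -> R} :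
  {in J, forall u, {for u, continuous g}} -> {in J, forall u, g u != 0} ->
  {in J &, forall u1 u2, 0 < g u1 * g u2}.
Proof.
move=> g_cont g_neq0.
suff no_change a b : a \in J -> b \in J -> a <= b -> ~ g a * g b < 0.
  move=> u1 u2 u1J u2J; rewrite lt_def mulf_neq0 ?g_neq0 //= leNgt.
  have [u12|u21] := leP u1 u2; apply/negP; first exact: no_change.
  by rewrite mulrC; apply: no_change => //; apply: ltW.
move=> aJ bJ ab gab.
have ab_sub v : v \in `[a, b] -> v \in J.
  by move=> vab; apply: (@interval_is_interval R J a b) => //; rewrite !(itvP vab).
have g_cont_ab : {within `[a, b], continuous g}.
  by apply: continuous_in_subspaceT => v /[1!inE] /ab_sub/g_cont.
have [|z zab gz0] := IVT ab g_cont_ab (v := 0).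
  have [ga0|ga0|ga0] := ltrgt0P (g a); last by move: gab; rewrite ga0 mul0r ltxx.
  - move: gab; rewrite pmulr_rlt0 // => gb0.
    by rewrite ge_min le_max (ltW gb0) (ltW ga0) orbT.
  - move: gab; rewrite nmulr_rlt0 // => gb0.
    by rewrite ge_min le_max (ltW gb0) (ltW ga0) orbT.
by move: (g_neq0 z (ab_sub z zab)); rewrite gz0 eqxx.
Qed.

Section SteadyStateCurve.
Context {R : realType} {n : nat}.

Definition gctrl_du (c : ctrl R) (x1 : R) : R :=
  match c with
  | Flow => 1
  | Activation xT _ _ => xT - x1
  | Inhibition _ _ _ => - x1
  end.

Definition gctrl_dx1 (c : ctrl R) (u : R) : R :=
  match c with
  | Flow => 0
  | Activation _ kon koff => - (u + kon) - koff
  | Inhibition _ kon koff => - kon - (u + koff)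
  end.

Lemma is_derive_gctrl (c : ctrl R) {x1 : R -> R} {u d : R} :
  is_derive u 1 x1 d ->
  is_derive u 1 (fun v => gctrl c v (x1 v)) (gctrl_du c (x1 u) + gctrl_dx1 c u * d).
Proof.
move=> dx1; case: c => [|xT kon koff|xT kon koff] /=.
- by apply: is_derive_eq; rewrite mul0r addr0.
- have -> : (fun v => (v + kon) * (xT - x1 v) - koff * x1 v) =
      (id + cst kon) * (cst xT - x1) - cst koff * x1 by [].
  by apply: is_derive_eq; rewrite !fctE /GRing.scale /=; ring.
- have -> : (fun v => kon * (xT - x1 v) - (v + koff) * x1 v) =
      cst kon * (cst xT - x1) - (id + cst koff) * x1 by [].
  by apply: is_derive_eq; rewrite !fctE /GRing.scale /=; ring.
Qed.

Context {f : 'rV[R]_n.+1 -> 'rV[R]_n.+1}.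

Lemma is_derive_Fsys_curve (c : ctrl R) {xs : R -> 'rV[R]_n.+1} {u : R} :
  derivable xs u 1 -> differentiable f (xs u) ->
  is_derive u 1 (fun v => Fsys f c (xs v) v)
    ('D_1 xs u *m (jacobian f (xs u) + gctrl_dx1 c u *: delta_mx 0 0)
     + gctrl_du c (xs u 0 0) *: delta_mx 0 0).
Proof.
move=> dxs df.
have dx1 : is_derive u 1 (fun v => xs v 0 0) ('D_1 xs u 0 0).
  apply: DeriveDef; first exact: (derivable_mxP xs u 1).1 dxs 0 0.
  by rewrite (derive_mx dxs) mxE.
have [dg g'] := is_derive_gctrl c dx1.
have xs_diff : differentiable xs u by apply/derivable1_diffP.
have g_diff : differentiable (fun v => gctrl c v (xs v 0 0)) u.
  exact/derivable1_diffP.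
have fxs_diff : differentiable (f \o xs) u by apply: differentiable_comp.
have ge_diff : differentiable
    (fun v => gctrl c v (xs v 0 0) *: (delta_mx 0 0 : 'rV[R]_n.+1)) u.
  exact: differentiableZl.
have -> : (fun v => Fsys f c (xs v) v) =
    (f \o xs) + (fun v => gctrl c v (xs v 0 0) *: (delta_mx 0 0 : 'rV[R]_n.+1)).
  by [].
apply: DeriveDef; first by apply: derivableD; apply: diff_derivable.
rewrite deriveD; try exact: diff_derivable.
rewrite mulmxDr -scalemxAr mul_row_delta scalerA -addrA -scalerDl.
congr (_ + _).
  by rewrite deriveE // diff_comp // /= -!deriveE // deriveEjacobian.
by rewrite deriveE // diffZl // -deriveE // g' addrC.
Qed.

Lemma jac_jacobian (x : 'rV[R]_n.+1) :
  differentiable f x -> jac f x = (jacobian f x)^T.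
Proof. by move=> f_diff; apply/matrixP => i k; rewrite !mxE deriveE. Qed.

Lemma gctrl_du_steady_neq0 {c : ctrl R} {X : set 'rV[R]_n.+1} {J : interval R}
    {x : 'rV[R]_n.+1} {u : R} :
  ctrl_ok f c X J -> X x -> u \in J -> Fsys f c x u = 0 ->
  gctrl_du c (x 0 0) != 0.
Proof.
case: c => [|xT kon koff|xT kon koff] /=; first by rewrite oner_eq0.
- case=> _ _ _ _ steady Xx uJ /(steady _ _ Xx uJ) /andP[_ x_lt].
  by rewrite subr_eq0 gt_eqF.
- case=> _ _ _ _ steady Xx uJ /(steady _ _ Xx uJ) /andP[x_gt _].
  by rewrite oppr_eq0 gt_eqF.
Qed.

Lemma steady_curve_derive_neq0 {X : set 'rV[R]_n.+1} {J : interval R}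
    {s : 'I_n.+1 -> 'I_n.+1 -> sgn} {c : ctrl R} {j : 'I_n.+1}
    {xs : R -> 'rV[R]_n.+1} :
  (exists a b, [/\ a \in J, b \in J & a < b]) ->
  (forall x, X x -> differentiable f x) ->
  (forall x, X x -> forall i k, has_sgn (s i k) (jac f x i k)) ->
  ctrl_ok f c X J -> minor1j s j != 0 -> ~ mixed_signs (minor1j s j) ->
  steady_curve f c X J xs -> {in J, forall u, 'D_1 xs u 0 j != 0}.
Proof.
move=> J_nondeg f_diff f_sgn c_ok minor_neq0 not_mixed [xsX xs0 xs_der _] u uJ.
have [F_der F'] := is_derive_Fsys_curve c (xs_der u uJ) (f_diff _ (xsX u uJ)).
have := derive1_eq0_on_itv J_nondeg uJ xs0 F_der; rewrite F' => /eqP.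
rewrite addr_eq0 -scaleNr => /eqP/row_solution_coord_neq0; apply.
  by rewrite oppr_eq0 (gctrl_du_steady_neq0 c_ok (xsX u uJ) uJ (xs0 u uJ)).
rewrite cofactor_addZdelta -cofactor_tr -jac_jacobian; last exact/f_diff/xsX.
rewrite /cofactor mulf_neq0 ?signr_eq0 //.
exact: minor1j_sign_pattern_neq0 (f_sgn _ (xsX u uJ)) minor_neq0 not_mixed.
Qed.

End SteadyStateCurve.

Theorem lemma9 (R : realType) (n : nat) (X : set 'rV[R]_n.+1) (J : interval R)
  (f : 'rV[R]_n.+1 -> 'rV[R]_n.+1) (s : 'I_n.+1 -> 'I_n.+1 -> sgn)
  (c : ctrl R) (j : 'I_n.+1) :
  (exists a b, [/\ a \in J, b \in J & a < b]) ->
  (forall x, X x -> differentiable f x) ->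
  {within X, continuous (jac f)} ->
  (forall x, X x -> forall i k, has_sgn (s i k) (jac f x i k)) ->
  (forall i, s i i = SNeg) ->
  ctrl_ok f c X J ->
  A0 f c X J ->
  minor1j s j != 0 ->
  ~ mixed_signs (minor1j s j) ->
  forall xs : R -> 'rV[R]_n.+1, steady_curve f c X J xs ->
    ~ quasi_adaptive J xs j /\ ~ biphasic J xs j.
Proof.
move=> J_nondeg f_diff _ f_sgn _ c_ok _ minor_neq0 not_mixed xs xs_steady.
have xj'_neq0 := steady_curve_derive_neq0 J_nondeg f_diff f_sgn c_ok
  minor_neq0 not_mixed xs_steady.
have xj'_cont : {in J, forall u, {for u, continuous (fun v => 'D_1 xs v 0 j)}}.
  have [_ _ _ xs'_cont] := xs_steady.
  move=> u uJ; exact: (continuous_comp (xs'_cont u uJ)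
    (@coord_continuous R 1 n.+1 0 j _)).
split => [[u uJ /eqP]|[u1 [u2 [u1J u2J]]]]; first exact/negP/xj'_neq0.
by apply/negP; rewrite -leNgt ltW // (continuous_neq0_on_itv_sign xj'_cont).
Qed.
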